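(* In the session calculus, weak fairness of actions (WA) coincides with J-fairness of actions (JA): a path is WA-fair iff it is JA-fair.
   Context: Session calculus: threads $P ::= \mathbf{end} \mid \bigoplus_{i\in I} p_i!\lambda_i;P_i \mid \sum_{i\in I} p_i?\lambda_i;P_i \mid X \mid \mu X.P$ (guarded recursion), thread states additionally $\langle q!\lambda\rangle;P$; networks $p[\![P]\!]\mid 0\mid N\parallel N$ with distinct locations and closed threads, modulo associativity/commutativity/unit. Transitions: (choice) $p[\![\bigoplus_{i\in I}p_i!\lambda_i;P_i]\!]\parallel N \xrightarrow{\tau} p[\![\langle p_k!\lambda_k\rangle;P_k]\!]\parallel N$; (unfold) $p[\![\mu X.P]\!]\parallel N\xrightarrow{\tau} p[\![P\{\mu X.P/X\}]\!]\parallel N$; (comm) $p_k[\![\langle q!\lambda_k\rangle;Q]\!]\parallel q[\![\sum_{i\in I}p_i?\lambda_i;P_i]\!]\parallel N \xrightarrow{(p_k,\lambda_k,q)} p_k[\![Q]\!]\parallel q[\![P_k]\!]\parallel N$. $\mathrm{comp}(t)$ is the moving location for a $\tau$-transition and $\{p,q\}$ for label $(p,\lambda,q)$; $t,u$ are concurrent if $\mathrm{comp}(t)\cap\mathrm{comp}(u)=\emptyset$. A path is a network state with a maximal sequence of transitions. Actions as tasks: a label $\alpha$ is enabled in $N$ if some transition labelled $\alpha$ leaves $N$; a path engages in $\alpha$ if it contains a transition labelled $\alpha$. $\alpha$ is perpetually enabled on a path if enabled in all its states. WA: $\pi$ is WA-fair if for every suffix $\pi'$, every action perpetually enabled on $\pi'$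 is engaged in by $\pi'$. JA: $\alpha$ is enabled during a transition $u$ from $N$ to $N'$ if there is a transition $t$ from $N$ labelled $\alpha$ that is concurrent with $u$; $\alpha$ is continuously enabled on a path if enabled in all its states and during all its transitions; $\pi$ is JA-fair if for every suffix $\pi'$, every action continuously enabled on $\pi'$ is engaged in by $\pi'$. *)

From Stdlib Require Import List Arith.
Import ListNotations.
Set Implicit Arguments.

Section Session.
Variables (Loc Lab : Type).

(* Thread states.  Recursion variables are named by nat.
   TSend bs = (+)_{i} p_i!l_i;P_i,  TRecv bs = sum_i p_i?l_i;P_i,
   TSent q l P = <q!l>;P  (a thread state after an internal choice). *)
Inductive thread : Type :=
| TEnd : thread
| TSend : list (Loc * Lab * thread) -> thread
| TRecv : list (Loc * Lab * thread) -> thread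
| TVar : nat -> thread
| TMu : nat -> thread -> thread
| TSent : Loc -> Lab -> thread -> thread.

(* substitution P{R/X} (R will always be closed, so no capture) *)
Fixpoint subst (X : nat) (R : thread) (P : thread) : thread :=
  match P with
  | TEnd => TEnd
  | TSend bs => TSend ((fix go (l : list (Loc * Lab * thread)) :=
                         match l with
                         | [] => []
                         | (p, a, Q) :: l' => (p, a, subst X R Q) :: go l'
                         end) bs)
  | TRecv bs => TRecv ((fix go (l : list (Loc * Lab * thread)) :=
                         match l with
                         | [] => []
                         | (p, a, Q) :: l' => (p, a, subst X R Q) :: go l'
                         end) bs)
  | TVar Y => if Nat.eqb X Y then R else TVar Y
  | TMu Y Q => if Nat.eqb X Y then TMu Y Q else TMu Y (subst X R Q)
  | TSent q a Q => TSent q a (subst X R Q)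
  end.

Fixpoint closed_in (xs : list nat) (P : thread) : Prop :=
  match P with
  | TEnd => True
  | TSend bs | TRecv bs =>
      (fix go (l : list (Loc * Lab * thread)) : Prop :=
         match l with
         | [] => True
         | (_, _, Q) :: l' => closed_in xs Q /\ go l'
         end) bs
  | TVar Y => In Y xs
  | TMu Y Q => closed_in (Y :: xs) Q
  | TSent _ _ Q => closed_in xs Q
  end.

Definition closed (P : thread) : Prop := closed_in [] P.

Fixpoint unguarded (X : nat) (P : thread) : Prop :=
  match P with
  | TVar Y => X = Y
  | TMu Y Q => X <> Y /\ unguarded X Q
  | _ => False
  end.

Fixpoint guarded (P : thread) : Prop :=
  match P with
  | TEnd | TVar _ => True
  | TSend bs | TRecv bs =>
      (fix go (l : list (Loc * Lab * thread)) : Prop :=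
         match l with
         | [] => True
         | (_, _, Q) :: l' => guarded Q /\ go l'
         end) bs
  | TMu Y Q => ~ unguarded Y Q /\ guarded Q
  | TSent _ _ Q => guarded Q
  end.

(* A network p1[[P1]] || ... || pn[[Pn]] with distinct locations, taken
   modulo associativity/commutativity/unit, is a finite partial map from
   locations to thread states. *)
Definition network := Loc -> option thread.

Definition wf_network (N : network) : Prop :=
  (exists dom : list Loc, forall p, N p <> None -> In p dom) /\
  (forall p P, N p = Some P -> closed P /\ guarded P).

(* transitions, identified by their kind and the locations involved *)
Inductive tinfo : Type :=
| TrTau : Loc -> tinfo
| TrComm : Loc -> Lab -> Loc -> tinfo.

Inductive label : Type :=
| Tau : label
| Comm : Loc -> Lab -> Loc -> label.

Definition lab (t : tinfo) : label :=
  match t with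
  | TrTau _ => Tau
  | TrComm p l q => Comm p l q
  end.

Definition comp (t : tinfo) (r : Loc) : Prop :=
  match t with
  | TrTau p => r = p
  | TrComm p _ q => r = p \/ r = q
  end.

Definition concurrent (t u : tinfo) : Prop :=
  forall r, comp t r -> ~ comp u r.

Definition others_same (N N' : network) (S : Loc -> Prop) : Prop :=
  forall r, ~ S r -> N' r = N r.

Inductive step (N : network) : tinfo -> network -> Prop :=
| st_choice : forall p bs q l P N',
    N p = Some (TSend bs) -> In (q, l, P) bs ->
    N' p = Some (TSent q l P) ->
    others_same N N' (fun r => r = p) ->
    step N (TrTau p) N'
| st_unfold : forall p X P N',
    N p = Some (TMu X P) ->
    N' p = Some (subst X (TMu X P) P) ->
    others_same N N' (fun r => r = p) ->
    step N (TrTau p) N'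
| st_comm : forall p q l Q bs P N',
    p <> q ->
    N p = Some (TSent q l Q) -> N q = Some (TRecv bs) -> In (p, l, P) bs ->
    N' p = Some Q -> N' q = Some P ->
    others_same N N' (fun r => r = p \/ r = q) ->
    step N (TrComm p l q) N'.

(* Paths: states st 0, st 1, ..., transitions tr i from st i to st (i+1);
   plen = Some n : finite path with n transitions; None : infinite. *)
Record path : Type := mkPath {
  st : nat -> network;
  tr : nat -> tinfo;
  plen : option nat
}.

Definition is_state_index (pi : path) (i : nat) : Prop :=
  match plen pi with None => True | Some n => i <= n end.
Definition is_trans_index (pi : path) (i : nat) : Prop :=
  match plen pi with None => True | Some n => i < n end.

(* a path is a network state with a maximal sequence of transitions *)
Definition is_path (pi : path) : Prop :=
  (forall i, is_trans_index pi i -> step (st pi i) (tr pi i) (st pi (S i))) /\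
  (forall n, plen pi = Some n -> forall t N', ~ step (st pi n) t N').

Definition suffix (pi : path) (k : nat) : path :=
  mkPath (fun i => st pi (k + i)) (fun i => tr pi (k + i))
         (option_map (fun n => n - k) (plen pi)).

Definition enabled (N : network) (a : label) : Prop :=
  exists t N', step N t N' /\ lab t = a.

Definition engages (pi : path) (a : label) : Prop :=
  exists i, is_trans_index pi i /\ lab (tr pi i) = a.

Definition perpetually_enabled (pi : path) (a : label) : Prop :=
  forall i, is_state_index pi i -> enabled (st pi i) a.

Definition enabled_during (N : network) (u : tinfo) (a : label) : Prop :=
  exists t N', step N t N' /\ lab t = a /\ concurrent t u.

Definition continuously_enabled (pi : path) (a : label) : Prop :=
  perpetually_enabled pi a /\
  forall i, is_trans_index pi i -> enabled_during (st pi i) (tr pi i) a.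

Definition WA_fair (pi : path) : Prop :=
  forall k, is_state_index pi k -> forall a,
    perpetually_enabled (suffix pi k) a -> engages (suffix pi k) a.

Definition JA_fair (pi : path) : Prop :=
  forall k, is_state_index pi k -> forall a,
    continuously_enabled (suffix pi k) a -> engages (suffix pi k) a.

End Session.

From Stdlib Require Import List Wf_nat Lia Classical ClassicalEpsilon.
Import ListNotations.
Set Implicit Arguments.
Unset Strict Implicit.

(* Continuous enabledness implies perpetual enabledness, so WA-fair paths are
   JA-fair.  For the converse we show that an action that is perpetually
   enabled but never taken from some point on is continuously enabled from a
   (possibly later) point on; JA-fairness then forces it to be taken.
   - A tau-action is enabled because some location p holds a choice or a
     recursion.  If no tau-transition follows, only communications happen,
     and these never involve p: p keeps its thread, and its tau-transition
     stays enabled concurrently with every step.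
   - An action (p,l,q) is enabled because p holds <q!l>;Q and q a receive.
     Every transition moving q lets q receive and so strictly shrinks q's
     thread, while other transitions touch neither p nor q.  By well-founded
     induction on the size of q's thread, from some point on q is never
     moved, and then (p,l,q) is enabled during every transition. *)

Section Fairness.
Variables (Loc Lab : Type).

Notation network := (network Loc Lab).
Notation thread := (thread Loc Lab).
Notation label := (label Loc Lab).
Notation path := (path Loc Lab).

(* Syntactic size of a thread; receiving strictly decreases it. *)
Fixpoint tsize (P : thread) : nat :=
  match P with
  | TSend bs | TRecv bs =>
      S ((fix go (l : list (Loc * Lab * thread)) : nat :=
            match l with
            | [] => 0
            | (_, _, Q) :: l' => tsize Q + go l'
            end) bs)
  | TMu _ Q | TSent _ _ Q => S (tsize Q)
  | _ => 1
  end.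

Lemma tsize_branch (bs : list (Loc * Lab * thread)) p l P :
  In (p, l, P) bs -> tsize P < tsize (TRecv bs).
Proof.
  induction bs as [|[[p' l'] Q] bs IH]; simpl; [tauto|].
  intros [E|H].
  - inversion E; subst; lia.
  - specialize (IH H); simpl in IH; lia.
Qed.

Definition override (S : Loc -> Prop) (N' M : network) : network :=
  fun r => if excluded_middle_informative (S r) then N' r else M r.

Lemma override_in S N' M r : S r -> override S N' M r = N' r.
Proof. unfold override; destruct excluded_middle_informative; tauto. Qed.

Lemma override_others_same S N' M : others_same M (override S N' M) S.
Proof. intros r nr; unfold override; destruct excluded_middle_informative; tauto. Qed.

Lemma step_frame (N M N' : network) t :
  step N t N' -> (forall r, comp t r -> M r = N r) ->
  exists M', step M t M'.
Proof.
  intros H E; exists (override (comp t) N' M).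
  destruct H as [p bs q l P N' Hp Hin Hp' _ | p X P N' Hp Hp' _
                 | p q l Q bs P N' Hpq Hp Hq Hin Hp' Hq' _].
  - apply st_choice with (bs := bs) (q := q) (l := l) (P := P).
    + rewrite E; simpl; auto.
    + exact Hin.
    + rewrite override_in; simpl; auto.
    + apply override_others_same.
  - apply st_unfold with (X := X) (P := P).
    + rewrite E; simpl; auto.
    + rewrite override_in; simpl; auto.
    + apply override_others_same.
  - apply st_comm with (bs := bs) (Q := Q) (P := P).
    + exact Hpq.
    + rewrite E; simpl; auto.
    + rewrite E; simpl; auto.
    + exact Hin.
    + rewrite override_in; simpl; auto.
    + rewrite override_in; simpl; auto.
    + apply override_others_same.
Qed.

Lemma step_untouched (N N' : network) u r :
  step N u N' -> ~ comp u r -> N' r = N r.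
Proof.
  intros H nr.
  destruct H as [? ? ? ? ? ? ? ? ? Hoth | ? ? ? ? ? ? Hoth
                 | ? ? ? ? ? ? ? ? ? ? ? ? ? Hoth];
    apply Hoth; exact nr.
Qed.

Definition tau_ready (P : thread) : Prop :=
  match P with TSend _ | TMu _ _ => True | _ => False end.

Lemma tau_step_ready (N N' : network) p :
  step N (TrTau Lab p) N' -> exists P, N p = Some P /\ tau_ready P.
Proof. intros H; inversion H; subst; eexists; split; eauto; exact I. Qed.

(* Communications only involve a sender <q!l>;Q and a receiver, hence never
   a location whose thread is tau-ready. *)
Lemma comm_avoids_tau_ready (N N' : network) p l q r P :
  step N (TrComm p l q) N' -> N r = Some P -> tau_ready P ->
  ~ comp (TrComm p l q) r.
Proof.
  intros H Hr HP [e|e]; subst r;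
    inversion H as [| |? ? ? ? ? ? ? _ Hp Hq]; subst;
    [rewrite Hp in Hr | rewrite Hq in Hr]; inversion Hr; subst; exact HP.
Qed.

Lemma comm_enabled_inv (N : network) p l q :
  enabled N (Comm p l q) ->
  exists Q bs, N p = Some (TSent q l Q) /\ N q = Some (TRecv bs).
Proof.
  intros [t [N' [H Hl]]]; destruct t as [|p' l' q']; simpl in Hl; [discriminate|].
  inversion Hl; subst; inversion H; subst; eauto.
Qed.

(* A receiving location can only move by receiving, which shrinks its thread. *)
Lemma receiver_step_shrinks (N N' : network) u q bs :
  step N u N' -> N q = Some (TRecv bs) -> comp u q ->
  exists P, N' q = Some P /\ tsize P < tsize (TRecv bs).
Proof.
  intros H Hq c.
  destruct H as [p ? ? ? ? ? Hp | p ? ? ? Hp | p q' ? ? ? P ? _ Hp Hq' Hin _ HP _];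
    simpl in c.
  - subst; congruence.
  - subst; congruence.
  - destruct c as [c|c]; subst; [congruence|].
    rewrite Hq in Hq'; inversion Hq'; subst.
    exists P; split; [exact HP|]; eapply tsize_branch; eauto.
Qed.

Lemma sender_moves_with_receiver (N N' : network) u p l q Q :
  step N u N' -> N p = Some (TSent q l Q) -> comp u p -> comp u q.
Proof.
  intros H Hp c.
  destruct H as [p' ? ? ? ? ? Hp' | p' ? ? ? Hp' | p' q' ? ? ? ? ? _ Hp' Hq' _ _ _ _];
    simpl in c |- *.
  - subst; congruence.
  - subst; congruence.
  - destruct c as [c|c]; subst; [|congruence].
    rewrite Hp in Hp'; inversion Hp'; subst; auto.
Qed.

(* Size of the thread at [q] (0 if [q] is not a location of the network). *)
Definition size_at (N : network) (q : Loc) : nat :=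
  match N q with Some P => tsize P | None => 0 end.

Lemma comm_enabled_step (N N' : network) u p l q :
  enabled N (Comm p l q) -> step N u N' ->
  (comp u q -> size_at N' q < size_at N q) /\
  (~ comp u q ->
     size_at N' q = size_at N q /\ concurrent (TrComm p l q) u).
Proof.
  intros Hen Hu.
  destruct (comm_enabled_inv Hen) as [Q [bs [Hp Hq]]].
  unfold size_at; split.
  - intros c; destruct (receiver_step_shrinks Hu Hq c) as [P [-> Hlt]].
    rewrite Hq; exact Hlt.
  - intros nc; rewrite (step_untouched Hu nc); split; [reflexivity|].
    intros r [e|e] cu; subst r; [|contradiction].
    exact (nc (sender_moves_with_receiver Hu Hp cu)).
Qed.

Definition enabled_from (pi : path) k (a : label) : Prop :=
  forall j, k <= j -> is_state_index pi j -> enabled (st pi j) a.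

Definition engaged_from (pi : path) k (a : label) : Prop :=
  exists j, k <= j /\ is_trans_index pi j /\ lab (tr pi j) = a.

Definition cont_enabled_from (pi : path) k (a : label) : Prop :=
  enabled_from pi k a /\
  forall j, k <= j -> is_trans_index pi j ->
    enabled_during (st pi j) (tr pi j) a.

Lemma trans_index_state (pi : path) j :
  is_trans_index pi j -> is_state_index pi j /\ is_state_index pi (S j).
Proof. unfold is_trans_index, is_state_index; destruct (plen pi); lia. Qed.

Lemma state_index_trans (pi : path) j :
  is_state_index pi (S j) -> is_trans_index pi j.
Proof. unfold is_trans_index, is_state_index; destruct (plen pi); lia. Qed.

Lemma path_ind (pi : path) k (R : nat -> Prop) :
  R k ->
  (forall j, k <= j -> is_trans_index pi j -> R j -> R (S j)) ->
  forall j, k <= j -> is_state_index pi j -> R j.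
Proof.
  intros Hk HS j Hj; induction Hj as [|j Hj IH]; intros Hs; [exact Hk|].
  pose proof (state_index_trans Hs) as Ht.
  apply HS; auto; apply IH, (trans_index_state Ht).
Qed.

Lemma perpetually_enabled_suffix (pi : path) k a : is_state_index pi k ->
  perpetually_enabled (suffix pi k) a <-> enabled_from pi k a.
Proof.
  unfold perpetually_enabled, enabled_from, is_state_index; simpl.
  intros Hk; split.
  - intros H j Hj Hs; replace j with (k + (j - k)) by lia; apply H.
    destruct (plen pi); simpl; lia.
  - intros H i Hi; apply H; [lia|]; destruct (plen pi); simpl in *; lia.
Qed.

Lemma engages_suffix (pi : path) k a :
  engages (suffix pi k) a <-> engaged_from pi k a.
Proof.
  unfold engages, engaged_from, is_trans_index; simpl; split.
  - intros [i [Hi Hl]]; exists (k + i); repeat split; auto; [lia|].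
    destruct (plen pi); simpl in *; lia.
  - intros [j [Hj [Ht Hl]]]; exists (j - k).
    replace (k + (j - k)) with j by lia; split; auto.
    destruct (plen pi); simpl; lia.
Qed.

Lemma continuously_enabled_suffix (pi : path) k a : is_state_index pi k ->
  continuously_enabled (suffix pi k) a <-> cont_enabled_from pi k a.
Proof.
  intros Hk; unfold continuously_enabled, cont_enabled_from.
  rewrite perpetually_enabled_suffix by exact Hk.
  unfold is_trans_index; simpl; split; intros [He H]; split; auto.
  - intros j Hj Ht; replace j with (k + (j - k)) by lia; apply H.
    destruct (plen pi); simpl; lia.
  - intros i Hi; apply H; [lia|]; destruct (plen pi); simpl in *; lia.
Qed.

(* A perpetually enabled tau-action that is never taken is continuously
   enabled: the location enabling it is never moved by a communication. *)
Lemma tau_continuously_enabled (pi : path) k :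
  is_path pi -> is_state_index pi k ->
  enabled_from pi k (Tau Loc Lab) -> ~ engaged_from pi k (Tau Loc Lab) ->
  cont_enabled_from pi k (Tau Loc Lab).
Proof.
  intros [Hstep _] Hk Hen Hne.
  destruct (Hen k (le_n k) Hk) as [[p|] [N' [Hst Hl]]]; [|discriminate].
  destruct (tau_step_ready Hst) as [P [HP HR]].
  assert (Hcomm : forall j, k <= j -> is_trans_index pi j ->
            exists p' l' q', tr pi j = TrComm p' l' q').
  { intros j Hj Ht; destruct (tr pi j) as [r|p' l' q'] eqn:E; eauto.
    exfalso; apply Hne; exists j; rewrite E; auto. }
  assert (Hkeep : forall j, k <= j -> is_trans_index pi j ->
            st pi j p = Some P -> ~ comp (tr pi j) p).
  { intros j Hj Ht Hj'; destruct (Hcomm j Hj Ht) as [p' [l' [q' E]]].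
    pose proof (Hstep j Ht) as Hu; rewrite E in Hu |- *.
    exact (comm_avoids_tau_ready Hu Hj' HR). }
  assert (Hconst : forall j, k <= j -> is_state_index pi j -> st pi j p = Some P).
  { apply path_ind; [exact HP|].
    intros j Hj Ht Hj'; rewrite (step_untouched (Hstep j Ht)); auto. }
  split; [exact Hen|].
  intros j Hj Ht; pose proof (Hconst j Hj (proj1 (trans_index_state Ht))) as Ej.
  destruct (step_frame (M := st pi j) Hst) as [M' HM].
  { intros r c; simpl in c; subst r; rewrite Ej, HP; reflexivity. }
  exists (TrTau Lab p), M'; repeat split; [exact HM|].
  intros r c; simpl in c; subst r; exact (Hkeep j Hj Ht Ej).
Qed.

(* A perpetually enabled action (p,l,q) that is never taken is continuously
   enabled from some point on, by well-founded induction on q's thread. *)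
Lemma comm_eventually_continuously_enabled (pi : path) p l q :
  is_path pi -> forall k, is_state_index pi k ->
  enabled_from pi k (Comm p l q) -> ~ engaged_from pi k (Comm p l q) ->
  exists k', k <= k' /\ is_state_index pi k' /\
             cont_enabled_from pi k' (Comm p l q).
Proof.
  intros [Hstep _].
  set (m := fun k => size_at (st pi k) q).
  intros k; induction k as [k IH] using
    (well_founded_induction (well_founded_ltof nat m)).
  intros Hk Hen Hne.
  assert (Hloc : forall j, k <= j -> is_trans_index pi j ->
    (comp (tr pi j) q -> m (S j) < m j) /\
    (~ comp (tr pi j) q -> m (S j) = m j /\
                           concurrent (TrComm p l q) (tr pi j))).
  { intros j Hj Ht.
    exact (comm_enabled_step
             (Hen j Hj (proj1 (trans_index_state Ht))) (Hstep j Ht)). }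
  assert (Hdecr : forall j, k <= j -> is_state_index pi j -> m j <= m k).
  { apply path_ind; [lia|]; intros j Hj Ht IHj.
    destruct (Hloc j Hj Ht) as [Hmove Hstay].
    destruct (classic (comp (tr pi j) q)) as [c|c];
      [specialize (Hmove c) | destruct (Hstay c) as [Hm _]]; lia. }
  destruct (classic (exists j, k <= j /\ is_trans_index pi j /\ comp (tr pi j) q))
    as [[j [Hj [Ht Hc]]]|Hno].
  - (* q moves at step j: recurse from the smaller state j+1 *)
    destruct (trans_index_state Ht) as [Hs1 Hs2].
    assert (Hlt : m (S j) < m k)
      by (pose proof (proj1 (Hloc j Hj Ht) Hc); pose proof (Hdecr j Hj Hs1); lia).
    destruct (IH (S j) Hlt Hs2) as [k' [Hk' Hrest]].
    + intros j' Hj' Hs'; apply Hen; auto; lia.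
    + intros [j' [Hj' Hrest]]; apply Hne; exists j'; split; auto; lia.
    + exists k'; split; auto; lia.
  - (* q never moves: (p,l,q) is enabled concurrently with every step *)
    exists k; split; [lia|]; split; [exact Hk|]; split; [exact Hen|].
    intros j Hj Ht.
    destruct (Hen j Hj (proj1 (trans_index_state Ht))) as [t [N' [Hst Hl]]].
    exists t, N'; repeat split; auto.
    destruct t as [|p' l' q']; simpl in Hl; inversion Hl; subst.
    apply (Hloc j Hj Ht); intros c; apply Hno; eauto.
Qed.

Lemma perpetual_eventually_continuous (pi : path) k a :
  is_path pi -> is_state_index pi k ->
  enabled_from pi k a -> ~ engaged_from pi k a ->
  exists k', k <= k' /\ is_state_index pi k' /\ cont_enabled_from pi k' a.
Proof.
  intros Hp Hk Hen Hne; destruct a as [|p l q].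
  - exists k; repeat split; auto; apply tau_continuously_enabled; auto.
  - apply comm_eventually_continuously_enabled; auto.
Qed.

End Fairness.

Theorem mainTheorem16 (Loc Lab : Type) (pi : path Loc Lab) :
  wf_network (st pi 0) -> is_path pi ->
  (WA_fair pi <-> JA_fair pi).
Proof.
  intros _ Hp; split.
  - (* continuously enabled actions are perpetually enabled *)
    intros WA k Hk a [Hpe _]; exact (WA k Hk a Hpe).
  - intros JA k Hk a Hpe.
    apply perpetually_enabled_suffix in Hpe; auto.
    apply engages_suffix, NNPP; intros Hne.
    destruct (perpetual_eventually_continuous Hp Hk Hpe Hne)
      as [k' [Hkk' [Hk' Hce]]].
    apply continuously_enabled_suffix in Hce; auto.
    apply JA, engages_suffix in Hce as [j [Hj Hrest]]; auto.
    apply Hne; exists j; split; auto; lia.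
Qed.
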